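(* Let $G$ be a connected graph with $13$ vertices. Suppose one of the following holds: (1) $\Delta(G)=12$ and $e(G)=13+k$ for some $1\le k\le 10$; (2) $\Delta(G)=11$ and $e(G)=13+k$ for some $5\le k\le 10$; (3) $\Delta(G)=10$ and $e(G)=13+k$ for some $8\le k\le 10$. Then $R(G)>\sqrt{12}+\frac{2(k+1)}{13\sqrt{12}}$.
   Context: All graphs are finite and simple; $e(G)$ is the number of edges and $\Delta(G)$ the maximum degree. For a vertex $u$, $d(u)$ is its degree. The Randić index is $R(G)=\sum_{\{u,v\}\in E(G)} \frac{1}{\sqrt{d(u)d(v)}}$. *)

From HB Require Import structures.
From mathcomp Require Import all_boot all_order all_algebra.
Set Implicit Arguments. Unset Strict Implicit. Unset Printing Implicit Defensive.
Import Order.TTheory GRing.Theory Num.Theory.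

Section Graphs.
Variable n : nat.
Implicit Types (e : rel 'I_n).

Definition simple_graph e := symmetric e /\ irreflexive e.

Definition connected_graph e := forall x y : 'I_n, connect e x y.

Definition deg e (u : 'I_n) : nat := #|[set v | e u v]|.

Definition maxdeg e : nat := \max_(u : 'I_n) deg e u.

(* edge set: unordered pairs {u,v} represented as (u,v) with u < v *)
Definition edge_set e : {set 'I_n * 'I_n} :=
  [set p : 'I_n * 'I_n | e p.1 p.2 && (p.1 < p.2)%N].

Definition num_edges e : nat := #|edge_set e|.

Definition randic (R : rcfType) e : R :=
  \sum_(p in edge_set e) (Num.sqrt ((deg e p.1 * deg e p.2)%:R))^-1.
End Graphs.

(** Each edge term of the Randić index satisfies
    [1/(s_u s_v) >= (1/s_u + 1/s_v)/t - 1/t^2] with [s_w = sqrt d(w)] and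
    [t = sqrt Delta], because [(1/s_u - 1/t)(1/s_v - 1/t) >= 0].  Summing over the
    edges gives [R(G) >= (sum_u s_u)/t - e(G)/Delta], and the chord of the square
    root on [[1, Delta]] bounds [sum_u s_u] below by [n + (2 e(G) - n)/(t + 1)].
    For the listed values of [Delta] and [k] this lower bound already exceeds
    [sqrt 12 + 2(k+1)/(13 sqrt 12)], which is checked with rational approximations
    of the square roots. *)
From HB Require Import structures.
From mathcomp Require Import all_boot all_order all_algebra.
From mathcomp Require Import ring lra.
Set Implicit Arguments. Unset Strict Implicit. Unset Printing Implicit Defensive.
Import Order.TTheory GRing.Theory Num.Theory.
Local Open Scope ring_scope.

Section Degrees.
Variables (n : nat) (e : rel 'I_n).

Lemma deg_le_maxdeg u : (deg e u <= maxdeg e)%N.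
Proof. exact: (@leq_bigmax _ (fun u => deg e u) u). Qed.

Lemma connected_deg_gt0 u : (1 < n)%N -> connected_graph e -> (0 < deg e u)%N.
Proof.
move=> n_gt1 e_conn.
have [v uv] : exists v, v != u.
  have : (0 < #|predC1 u|)%N by rewrite cardC1 card_ord -ltnS prednK // ltnW.
  by case/card_gt0P=> v; exists v.
case/connectP: (e_conn u v) => -[|w p] /=; first by move=> _ vu; rewrite vu eqxx in uv.
case/andP=> euw _ _; rewrite card_gt0; apply/set0Pn; exists w; by rewrite inE.
Qed.

Hypothesis e_simple : simple_graph e.

Lemma sum_edge_set_ends {V : nmodType} (f : 'I_n -> V) :
  \sum_(p in edge_set e) (f p.1 + f p.2) = \sum_u f u *+ deg e u.
Proof.
case: e_simple => e_sym e_irr.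
have sum_deg : \sum_u f u *+ deg e u = \sum_(p | e p.1 p.2) f p.1.
  rewrite -(pair_big_dep xpredT (fun u v => e u v) (fun u _ => f u)) /=.
  apply: eq_bigr => u _; rewrite -sumr_const.
  by apply: eq_bigl => v; rewrite inE.
have swap : \sum_(p in edge_set e) f p.2 = \sum_(p | e p.1 p.2 && (p.2 < p.1)%N) f p.1.
  rewrite (reindex_inj (h := fun p : 'I_n * 'I_n => (p.2, p.1))); last first.
    by case=> a b [c d] /= [-> ->].
  by apply: eq_bigl => -[a b]; rewrite inE /= e_sym.
rewrite big_split /= swap sum_deg [RHS](bigID (fun p : 'I_n * 'I_n => (p.1 < p.2)%N)) /=.
congr (_ + _); apply: eq_bigl => -[a b] /=; first by rewrite inE.
case eab: (e a b) => //=.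
have a_neq_b : (a != b :> nat) by apply: contraTneq eab => /val_inj ->; rewrite e_irr.
by rewrite ltnNge leq_eqVlt negb_or a_neq_b.
Qed.

Lemma sum_deg : (\sum_u deg e u)%N = (num_edges e).*2.
Proof.
have := sum_edge_set_ends (fun _ => 1%R : nat).
rewrite sumr_const mulrnDl natn -addnn => h; apply: etrans _ (esym h).
by apply: eq_bigr => u _; rewrite natn.
Qed.

End Degrees.

Section RandicBound.
Variable R : rcfType.
Implicit Types s t x y : R.

Lemma sqrt_chord [s t] : 1 <= s -> s <= t -> 1 + (s ^+ 2 - 1) / (t + 1) <= s.
Proof. by move=> s_ge1 s_le_t; rewrite -lerBrDl ler_pdivrMr; nra. Qed.

Lemma mul_ge_tangent x y t : t <= x -> t <= y -> t * (x + y) - t ^+ 2 <= x * y.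
Proof. by move=> tx ty; nra. Qed.

Variables (n : nat) (e : rel 'I_n).
Hypotheses (e_simple : simple_graph e) (e_conn : connected_graph e) (n_gt1 : (1 < n)%N).

Local Notation sdeg u := (Num.sqrt (deg e u)%:R : R).
Local Notation smax := (Num.sqrt (maxdeg e)%:R : R).

Lemma sdeg_ge1 u : 1 <= sdeg u.
Proof. by rewrite -{1}sqrtr1 ler_sqrt // ler1n connected_deg_gt0. Qed.

Lemma sdeg_le_smax u : sdeg u <= smax.
Proof. by rewrite ler_sqrt // ler_nat deg_le_maxdeg. Qed.

Lemma sum_sdeg_ge :
  n%:R + ((num_edges e).*2%:R - n%:R) / (smax + 1) <= \sum_u sdeg u.
Proof.
have degE u : sdeg u ^+ 2 = (deg e u)%:R by rewrite sqr_sqrtr.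
apply: le_trans _ (ler_sum _ (fun u _ => sqrt_chord (sdeg_ge1 u) (sdeg_le_smax u))).
rewrite big_split /= sumr_const card_ord -mulr_suml sumrB sumr_const card_ord.
by under eq_bigr do rewrite degE; rewrite -natr_sum sum_deg.
Qed.

Lemma randic_ge_sum_sdeg :
  smax^-1 * \sum_u sdeg u - (num_edges e)%:R / (maxdeg e)%:R <= randic R e.
Proof.
have sdeg_gt0 u : 0 < sdeg u by apply: lt_le_trans (sdeg_ge1 u).
have inv_smax_le u : smax^-1 <= (sdeg u)^-1.
  by rewrite lef_pV2 ?posrE ?sdeg_le_smax // (lt_le_trans (sdeg_gt0 u)) ?sdeg_le_smax.
have randicE : randic R e = \sum_(p in edge_set e) (sdeg p.1)^-1 * (sdeg p.2)^-1.
  by apply: eq_bigr => p _; rewrite natrM sqrtrM // invfM.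
have sum_inv : \sum_(p in edge_set e) ((sdeg p.1)^-1 + (sdeg p.2)^-1) = \sum_u sdeg u.
  rewrite (sum_edge_set_ends e_simple (fun u => (sdeg u)^-1)); apply: eq_bigr => u _.
  by rewrite -[LHS]mulr_natl -{1}(sqr_sqrtr (ler0n R (deg e u))) expr2 mulfK ?gt_eqF.
have edge_sum : (num_edges e)%:R / (maxdeg e)%:R = \sum_(p in edge_set e) smax^-1 ^+ 2.
  by rewrite sumr_const exprVn sqr_sqrtr // mulr_natl.
rewrite randicE -sum_inv mulr_sumr edge_sum -sumrB.
by apply: ler_sum => p _; apply: mul_ge_tangent; apply: inv_smax_le.
Qed.

Lemma randic_ge_maxdeg_bound :
  smax^-1 * (n%:R + ((num_edges e).*2%:R - n%:R) / (smax + 1))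
    - (num_edges e)%:R / (maxdeg e)%:R <= randic R e.
Proof.
apply: le_trans _ randic_ge_sum_sdeg; rewrite lerD2r ler_wpM2l ?sum_sdeg_ge //.
by rewrite invr_ge0 sqrtr_ge0.
Qed.

End RandicBound.

(** [q >= sqrt 12], [c >= 1/sqrt 12], [a <= 1/sqrt D] and [b <= a/(1+a) <= 1/(sqrt D + 1)]
    are rational certificates reducing the comparison to linear arithmetic in [k]. *)
Lemma maxdeg_bound_gt (R : rcfType) (D k : nat) (q c a b : R) :
  (0 < D)%N -> 0 <= q -> 12 <= q ^+ 2 -> 0 <= c -> 1 <= 12 * c ^+ 2 ->
  0 < a -> D%:R * a ^+ 2 <= 1 -> 0 <= b -> b * (1 + a) <= a ->
  q + 2 * (k%:R + 1) / 13 * c < 13 * a + (13 + 2 * k%:R) * (a * b) - (13 + k%:R) / D%:R ->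
  Num.sqrt (12 : R) + 2 * (k.+1)%:R / (13 * Num.sqrt 12) <
  (Num.sqrt D%:R)^-1 * (13 + ((13 + k).*2%:R - 13) / (Num.sqrt D%:R + 1))
    - (13 + k)%:R / D%:R.
Proof.
move=> D_gt0 q_ge0 q_sqr c_ge0 c_sqr a_gt0 a_sqr b_ge0 b_bound bound.
set t := Num.sqrt D%:R; set s := Num.sqrt (12 : R).
have t_gt0 : 0 < t by rewrite sqrtr_gt0 ltr0n.
have s_gt0 : 0 < s by rewrite sqrtr_gt0.
have t_sqr : t ^+ 2 = D%:R by rewrite sqr_sqrtr.
have s_sqr : s ^+ 2 = 12 by rewrite sqr_sqrtr.
have s_le : s <= q by nra.
have inv_s_le : s^-1 <= c by rewrite -[s^-1]mul1r ler_pdivrMr //; nra.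
have at_le : a * t <= 1 by nra.
have a_le : a <= t^-1 by rewrite -[t^-1]mul1r ler_pdivlMr.
have b_le : b <= (t + 1)^-1 by rewrite -[(t + 1)^-1]mul1r ler_pdivlMr; nra.
have k_ge0 : 0 <= k%:R :> R by [].
have ab_le : (13 + 2 * k%:R) * (a * b) <= (13 + 2 * k%:R) * (t^-1 * (t + 1)^-1).
  by apply: ler_wpM2l; [lra | apply: ler_pM => //; exact: ltW].
have c_term : 2 * (k%:R + 1) / 13 * s^-1 <= 2 * (k%:R + 1) / 13 * c.
  by apply: ler_wpM2l => //; lra.
rewrite -[k.+1]addn1 -muln2 natrM !natrD invfM mulrA.
have -> : t^-1 * (13 + ((13 + k%:R) * 2 - 13) / (t + 1)) =
          13 * t^-1 + (13 + 2 * k%:R) * (t^-1 * (t + 1)^-1) by ring.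
lra.
Qed.

Theorem lemma3p7 (R : rcfType) (e : rel 'I_13) (k : nat) :
  simple_graph e -> connected_graph e ->
  [\/ (maxdeg e = 12 /\ 1 <= k <= 10)%N,
      (maxdeg e = 11 /\ 5 <= k <= 10)%N
    | (maxdeg e = 10 /\ 8 <= k <= 10)%N] ->
  num_edges e = (13 + k)%N ->
  Num.sqrt (12 : R) + (2 * (k.+1)%:R) / (13 * Num.sqrt 12) < randic R e.
Proof.
move=> e_simple e_conn maxdeg_k e_size.
apply: lt_le_trans _ (randic_ge_maxdeg_bound R e_simple e_conn (isT : 1 < 13)%N).
rewrite e_size.
have k_le10 : k%:R <= 10 :> R.
  by rewrite (ler_nat R k 10); case: maxdeg_k => -[_ /andP[_]].
case: maxdeg_k => -[-> /andP[k_lb _]].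
- have k_ge : 1 <= k%:R :> R by rewrite (ler_nat R 1 k).
  by apply: (@maxdeg_bound_gt R 12 k (1351/390) (181/627) (390/1351) (390/1741)) => //; lra.
- have k_ge : 5 <= k%:R :> R by rewrite (ler_nat R 5 k).
  by apply: (@maxdeg_bound_gt R 11 k (1351/390) (181/627) (60/199) (60/259)) => //; lra.
- have k_ge : 8 <= k%:R :> R by rewrite (ler_nat R 8 k).
  by apply: (@maxdeg_bound_gt R 10 k (1351/390) (181/627) (6/19) (6/25)) => //; lra.
Qed.
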